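(* Let $\mathscr{A}$ be a finite alphabet and let $\Xi\subseteq\mathscr{A}^{\mathbb{Z}}$ be a subshift containing a non-periodic element. Then for every $k\in\mathbb{N}$ the GAP-graph $\mathscr{G}_k(\Xi)$ has at least one branching vertex.
   Context: $\mathscr{A}^{\mathbb{Z}}$ has the product topology and shift $(T\xi)(j)=\xi(j-1)$; a subshift is a non-empty closed $T$-invariant subset; $\xi$ is periodic if $T^n\xi=\xi$ for some $n\geq1$. $\mathcal{D}(\Xi)$ is the set of finite subwords of elements of $\Xi$. The GAP-graph $\mathscr{G}_k(\Xi)$ has vertex set $\mathcal{D}(\Xi)\cap\mathscr{A}^k$, edge set $\mathcal{D}(\Xi)\cap\mathscr{A}^{k+1}$, the edge $a_0\cdots a_k$ going from $a_0\cdots a_{k-1}$ to $a_1\cdots a_k$. A vertex $u$ is branching if more than one edge starts at $u$ or more than one edge ends at $u$. *)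

From mathcomp Require Import all_boot all_order all_algebra.
Set Implicit Arguments. Unset Strict Implicit. Unset Printing Implicit Defensive.
Import GRing.Theory Num.Theory.
Local Open Scope ring_scope.

Section Subshifts.
Variable A : finType.

Definition config := int -> A.

Definition shift (xi : config) : config := fun j => xi (j - 1).

Definition cylinder (xi : config) (n : nat) : config -> Prop :=
  fun eta => forall j : int, `|j| <= n%:Z -> eta j = xi j.

(* closedness in the product topology of discrete A: the complement is open,
   i.e. every point outside X has a basic cylinder neighbourhood disjoint from X *)
Definition closed_config_set (X : config -> Prop) : Prop :=
  forall xi, ~ X xi -> exists n : nat, forall eta, cylinder xi n eta -> ~ X eta.

Definition shift_invariant (X : config -> Prop) : Prop :=
  (forall xi, X xi -> X (shift xi)) /\
  (forall xi, X xi -> exists eta, X eta /\ shift eta = xi).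

Definition subshift (X : config -> Prop) : Prop :=
  (exists xi, X xi) /\ closed_config_set X /\ shift_invariant X.

Definition periodic (xi : config) : Prop :=
  exists n : nat, (1 <= n)%N /\ iter n shift xi = xi.

Definition occurs_at (w : seq A) (xi : config) (i : int) : Prop :=
  w = [seq xi (i + j%:Z) | j <- iota 0 (size w)].

Definition language (X : config -> Prop) (w : seq A) : Prop :=
  exists xi, X xi /\ exists i, occurs_at w xi i.

Definition gap_vertex (X : config -> Prop) (k : nat) (u : seq A) : Prop :=
  language X u /\ size u = k.
Definition gap_edge (X : config -> Prop) (k : nat) (e : seq A) : Prop :=
  language X e /\ size e = k.+1.
Definition edge_source (k : nat) (e : seq A) : seq A := take k e.
Definition edge_target (e : seq A) : seq A := behead e.

Definition branching (X : config -> Prop) (k : nat) (u : seq A) : Prop :=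
  gap_vertex X k u /\
  ((exists e1 e2, gap_edge X k e1 /\ gap_edge X k e2 /\ e1 <> e2 /\
      edge_source k e1 = u /\ edge_source k e2 = u) \/
   (exists e1 e2, gap_edge X k e1 /\ gap_edge X k e2 /\ e1 <> e2 /\
      edge_target e1 = u /\ edge_target e2 = u)).

End Subshifts.

From mathcomp Require Import all_boot all_order all_algebra.
From mathcomp Require Import zify.
From Stdlib Require Import FunctionalExtensionality Classical.
Set Implicit Arguments. Unset Strict Implicit. Unset Printing Implicit Defensive.
Import GRing.Theory Num.Theory.
Local Open Scope ring_scope.

(* Follow a non-periodic xi in X through G_k: its length-k windows are vertices and its
   length-(k+1) windows are edges. Without branching vertices every vertex has at most one
   outgoing and one incoming edge, so once two windows of xi agree, all the windows obtained
   by translating both by the same amount agree as well. A finite alphabet forces two windows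
   at positions i < j to agree, and then xi is periodic with period j - i. *)

Lemma pigeonhole_nat (T : finType) (f : nat -> T) :
  exists i j, (i < j)%N /\ f i = f j.
Proof.
have /injectivePn [i [j neq_ij eq_f]] : ~~ injectiveb (fun i : 'I_#|T|.+1 => f i).
  by apply/injectiveP => /leq_card; rewrite card_ord ltnn.
case: (ltngtP i j) => [lt_ij | lt_ji | /val_inj eq_ij].
- by exists i, j.
- by exists j, i.
- by rewrite eq_ij eqxx in neq_ij.
Qed.

Section Windows.
Variables (A : finType) (xi : config A).

Definition window (i : int) (k : nat) : seq A := [seq xi (i + j%:Z) | j <- iota 0 k].

Lemma occurs_at_window i k : occurs_at (window i k) xi i.
Proof. by rewrite /occurs_at /window size_map size_iota. Qed.

Lemma size_window i k : size (window i k) = k.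
Proof. by rewrite size_map size_iota. Qed.

Lemma window_cons i k : window i k.+1 = xi i :: window (i + 1) k.
Proof.
rewrite /window /= addr0 -[1%N]addn0 iotaDl -map_comp.
by congr (_ :: _); apply: eq_map => j /=; rewrite PoszD addrA.
Qed.

Lemma take_window i k : take k (window i k.+1) = window i k.
Proof. by rewrite -map_take -addn1 iotaD take_size_cat ?size_iota. Qed.

Lemma window_repeats k : exists i j : nat, (i < j)%N /\ window i k = window j k.
Proof.
have [i [j [lt_ij eq_ij]]] :=
  pigeonhole_nat (fun i => @Tuple k A (window i k) (introT eqP (size_window i k))).
by exists i, j; split; last exact: (congr1 val eq_ij).
Qed.

Lemma iter_shift n : iter n (@shift A) xi = fun j => xi (j - n%:Z).
Proof.
elim: n => [|n IHn] /=; apply: functional_extensionality => j; first by rewrite subr0.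
by rewrite IHn /shift; congr (xi _); lia.
Qed.

Lemma periodic_of_translate (i j : nat) :
  (i < j)%N -> (forall m, xi (i%:Z + m) = xi (j%:Z + m)) -> periodic xi.
Proof.
move=> lt_ij xi_ij; exists (j - i)%N; split; first by rewrite subn_gt0.
rewrite iter_shift; apply: functional_extensionality => m.
have -> : m - (j - i)%N%:Z = i%:Z + (m - j%:Z) by lia.
by rewrite xi_ij addrC subrK.
Qed.

End Windows.

Section NoBranching.
Variables (A : finType) (X : config A -> Prop) (k : nat) (xi : config A).
Hypotheses (Xxi : X xi) (no_branching : forall u, ~ branching X k u).

Local Notation W i := (window xi i k).
Local Notation E i := (window xi i k.+1).

Lemma gap_vertex_window i : gap_vertex X k (W i).
Proof. by split; [exists xi; split=> //; exists i; apply: occurs_at_window | apply: size_window]. Qed.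

Lemma gap_edge_window i : gap_edge X k (E i).
Proof. by split; [exists xi; split=> //; exists i; apply: occurs_at_window | apply: size_window]. Qed.

Lemma edge_eq_of_source i j : W i = W j -> E i = E j.
Proof.
move=> eq_ij; case: (eqVneq (E i) (E j)) => [// | /eqP neq_E].
exfalso; apply: (@no_branching (W i)); split; first exact: gap_vertex_window.
left; exists (E i), (E j).
do 2 (split; first exact: gap_edge_window).
by split=> //; rewrite /edge_source !take_window eq_ij.
Qed.

Lemma edge_eq_of_target i j : W (i + 1) = W (j + 1) -> E i = E j.
Proof.
move=> eq_ij; case: (eqVneq (E i) (E j)) => [// | /eqP neq_E].
exfalso; apply: (@no_branching (W (i + 1))); split; first exact: gap_vertex_window.
right; exists (E i), (E j).
do 2 (split; first exact: gap_edge_window).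
by split=> //; rewrite /edge_target !window_cons eq_ij.
Qed.

Lemma window_eq_succ i j : W i = W j -> W (i + 1) = W (j + 1).
Proof.
by move=> /edge_eq_of_source; rewrite !window_cons => -[_].
Qed.

Lemma window_eq_pred i j : W i = W j -> W (i - 1) = W (j - 1).
Proof.
move=> eq_ij; rewrite -[W (i - 1)]take_window -[W (j - 1)]take_window.
by congr take; apply: edge_eq_of_target; rewrite !subrK.
Qed.

Lemma window_eq_translate i j : W i = W j -> forall m, W (i + m) = W (j + m).
Proof.
move=> eq_ij; elim/int_rect => [|n IHn|n IHn]; first by rewrite !addr0.
  by rewrite -[n.+1]addn1 PoszD !addrA; apply: window_eq_succ.
by rewrite -[n.+1]addn1 PoszD opprD !addrA; apply: window_eq_pred.
Qed.

Lemma config_eq_translate i j : W i = W j -> forall m, xi (i + m) = xi (j + m).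
Proof.
move=> /window_eq_translate eq_ij m.
by have := edge_eq_of_source (eq_ij m); rewrite !window_cons => -[].
Qed.

End NoBranching.

Theorem corollary6 (A : finType) (X : config A -> Prop) :
  subshift X -> (exists xi, X xi /\ ~ periodic xi) ->
  forall k : nat, exists u : seq A, branching X k u.
Proof.
move=> _ [xi [Xxi aperiodic]] k; apply: NNPP => no_branching_vertex.
have no_branching u : ~ branching X k u.
  by move=> branching_u; apply: no_branching_vertex; exists u.
have [i [j [lt_ij eq_ij]]] := window_repeats xi k.
apply: aperiodic; apply: (periodic_of_translate lt_ij).
exact: config_eq_translate Xxi no_branching _ _ eq_ij.
Qed.
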